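(* Let $\mathcal{C}$ be a class of finite graphs for which there is a natural number $N$ such that every set of pairwise disjoint edges (edges $\{a_i,b_i\}$, $i=1,\dots,k$, with all $a_1,\dots,a_k,b_1,\dots,b_k$ distinct) in every member of $\mathcal{C}$ has size at most $N$. Then $\mathcal{C}$ is well quasi-ordered under both the standard and the strong homomorphic image orderings.
   Context: A graph is a set with a symmetric binary edge relation. A homomorphism maps edges to edges; it is strong if additionally every edge of the target among vertices of the image is the image of an edge. Standard homomorphic image ordering: $A\preceq B$ iff there is a surjective homomorphism $B\to A$; strong: iff there is a surjective strong homomorphism $B\to A$. Well quasi-ordered means no infinite strictly decreasing sequence and no infinite antichain; structures considered up to isomorphism. *)

From mathcomp Require Import all_boot.
Set Implicit Arguments. Unset Strict Implicit. Unset Printing Implicit Defensive.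

(* A finite graph: a finite vertex set with a symmetric (boolean) edge
   relation.  Loops are allowed, as in the paper ("a set with a symmetric
   binary edge relation"). *)
Record fgr := FGr {
  vert :> finType;
  edge : rel vert;
  edge_sym : symmetric edge
}.

Definition is_hom (G H : fgr) (f : G -> H) : Prop :=
  forall x y : G, edge x y -> edge (f x) (f y).

Definition is_strong_hom (G H : fgr) (f : G -> H) : Prop :=
  is_hom f /\
  forall u v : H, (exists x, f x = u) -> (exists y, f y = v) -> edge u v ->
    exists x y : G, [/\ f x = u, f y = v & edge x y].

Definition surj (A B : Type) (f : A -> B) : Prop := forall b, exists a, f a = b.

Definition hom_le (A B : fgr) : Prop :=
  exists f : B -> A, is_hom f /\ surj f.

Definition strong_hom_le (A B : fgr) : Prop :=
  exists f : B -> A, is_strong_hom f /\ surj f.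

Definition disjoint_edges (G : fgr) (k : nat) (a b : 'I_k -> G) : Prop :=
  (forall i, edge (a i) (b i)) /\
  injective (fun i : 'I_k + 'I_k => match i with inl j => a j | inr j => b j end).

Definition wqo_on (C : fgr -> Prop) (le : fgr -> fgr -> Prop) : Prop :=
  (~ exists g : nat -> fgr, (forall n, C (g n)) /\
       forall n, le (g n.+1) (g n) /\ ~ le (g n) (g n.+1)) /\
  (~ exists g : nat -> fgr, (forall n, C (g n)) /\
       forall i j, i <> j -> ~ le (g i) (g j)).

From mathcomp Require Import all_boot zify.
From Stdlib Require Import Classical ClassicalEpsilon.
Set Implicit Arguments. Unset Strict Implicit. Unset Printing Implicit Defensive.

(* The endpoints S of a maximum matching form a vertex cover with at most 2N
   vertices, so outside S a graph only has loops and edges into S.  Hence it is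
   described by the adjacency inside S together with, for each of the finitely
   many profiles (loop bit, neighbours in S), the number of outside vertices with
   that profile.  Collapsing outside vertices of equal profile is a strong
   surjective homomorphism, so a graph is a strong homomorphic image of any graph
   with the same adjacency on S, the same inhabited profiles and at least as many
   vertices of each profile.  Dickson's lemma on these class sizes, labelled by
   the finite remaining data, finds in every sequence some i < j with g i a strong
   image of g j: there is no infinite antichain.  There is no infinite strictly
   descending chain either: a surjective homomorphism that is not an isomorphism
   loses vertices or, being bijective, gains edges. *)

Lemma ex_argmin_after (f : nat -> nat) (a : nat) :
  exists n, a < n /\ forall k, a < k -> f n <= f k.
Proof.
suff min_below v : forall n, a < n -> f n <= v ->
    exists m, a < m /\ forall k, a < k -> f m <= f k.
  exact: (min_below (f a.+1) a.+1).
elim/ltn_ind: v => v IH n an fnv.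
have [[k ak fkn] | nok] := classic (exists2 k, a < k & f k < f n).
  exact: IH (f k) (leq_trans fkn fnv) k ak (leqnn _).
by exists n; split=> // k ak; rewrite leqNgt; apply/negP => fkn; apply: nok; exists k.
Qed.

Lemma ex_nondecreasing_subseq (f : nat -> nat) :
  exists2 t : nat -> nat, {homo t : m n / m < n} & {homo f \o t : m n / m <= n}.
Proof.
pose argmin a := constructive_indefinite_description _ (ex_argmin_after f a).
pose next a := proj1_sig (argmin a).
have next_gt a : a < next a by case: (proj2_sig (argmin a)).
have next_min a k : a < k -> f (next a) <= f k by case: (proj2_sig (argmin a)) => _; apply.
exists (fun n => iter n.+1 next 0).
  by apply: homo_ltn => [? ? ? /ltn_trans|n]; [apply | apply: next_gt].
apply: homo_leq => [//|? ? ? /leq_trans|n /=]; first by apply.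
exact/next_min/(ltn_trans (next_gt _) (next_gt _)).
Qed.

Lemma ex_nondecreasing_subseq_on (I : eqType) (x : nat -> I -> nat) (cs : seq I) :
  exists2 s : nat -> nat, {homo s : m n / m < n} &
    forall c, c \in cs -> {homo (fun n => x (s n) c) : m n / m <= n}.
Proof.
elim: cs => [|c cs [s s_incr s_mono]]; first by exists id.
have [t t_incr t_mono] := ex_nondecreasing_subseq (fun n => x (s n) c).
have t_homo : {homo t : m n / m <= n}.
  by move=> m n; rewrite leq_eqVlt => /predU1P [-> // | /t_incr/ltnW].
exists (s \o t) => [m n mn | c']; first exact/s_incr/t_incr.
rewrite inE => /predU1P [-> // | c'cs] m n mn.
exact/s_mono/t_homo.
Qed.

Lemma dickson (I : finType) (x : nat -> I -> nat) :
  exists i j, i < j /\ forall c, x i c <= x j c.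
Proof.
have [s s_incr s_mono] := ex_nondecreasing_subseq_on x (enum I).
by exists (s 0), (s 1); split=> [|c]; [exact: s_incr | apply: s_mono; rewrite ?mem_enum].
Qed.

Lemma dickson_labelled (L I : finType) (lab : nat -> L) (x : nat -> I -> nat) :
  exists i j, [/\ i < j, lab i = lab j & forall c, x i c <= x j c].
Proof.
pose y n (c : I + L) := match c with inl c => x n c | inr l => nat_of_bool (lab n == l) end.
have [i [j [ij le_y]]] := dickson y.
exists i, j; split=> // [|c]; last exact: le_y (inl c).
(* the indicator coordinate [lab n == lab i] forces equal labels *)
by have := le_y (inr (lab i)); rewrite /= eqxx; case: eqP.
Qed.

Lemma no_lex_descent (v w : nat -> nat) :
  ~ (forall n, v n.+1 < v n \/ v n.+1 = v n /\ w n.+1 < w n).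
Proof.
move: v w; suff: forall a b v w, v 0 = a -> w 0 = b ->
    ~ (forall n, v n.+1 < v n \/ v n.+1 = v n /\ w n.+1 < w n) by move=> + v w; apply.
elim/ltn_ind => a IHa; elim/ltn_ind => b IHb v w va wb step.
have step_shift n := step n.+1.
have [v1 | [v1 w1]] := step 0.
  by apply: (IHa (v 1) _ (w 1) (fun n => v n.+1) (fun n => w n.+1) _ _ step_shift); rewrite -?va.
by apply: (IHb (w 1) _ (fun n => v n.+1) (fun n => w n.+1) _ _ step_shift); rewrite -?wb -?va.
Qed.

Definition ecount (G : fgr) := #|[set p : G * G | edge p.1 p.2]|.

Lemma ecount_le (G : fgr) : ecount G <= #|G| ^ 2.
Proof. by rewrite /ecount -mulnn -card_prod; apply: max_card. Qed.

Lemma strong_hom_le_hom_le (A B : fgr) : strong_hom_le A B -> hom_le A B.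
Proof. by case=> f [[f_hom _] f_surj]; exists f. Qed.

Lemma imset_surj (A B : finType) (f : A -> B) : surj f -> f @: setT = setT.
Proof.
by move=> f_surj; apply/setP => b; rewrite inE; have [a <-] := f_surj b; rewrite imset_f.
Qed.

Lemma surj_card (A B : finType) (f : A -> B) : surj f -> #|B| <= #|A|.
Proof.
by move=> f_surj; rewrite -cardsT -(imset_surj f_surj) -[#|A|]cardsT leq_imset_card.
Qed.

Lemma surj_card_inj (A B : finType) (f : A -> B) :
  surj f -> #|A| <= #|B| -> injective f.
Proof.
move=> f_surj le_AB x y; apply: (imset_injP _ x y); rewrite ?inE //.
by rewrite imset_surj // !cardsT eqn_leq le_AB (surj_card f_surj).
Qed.

Lemma ecount_inj_hom (A B : fgr) (f : A -> B) :
  is_hom f -> injective f -> ecount A <= ecount B.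
Proof.
move=> f_hom f_inj; pose f2 (p : A * A) := (f p.1, f p.2).
have f2_inj : injective f2 by move=> [? ?] [? ?] [/f_inj -> /f_inj ->].
rewrite /ecount -(card_imset _ f2_inj); apply/subset_leq_card/subsetP => q.
by case/imsetP=> p; rewrite inE => /f_hom ? ->; rewrite inE.
Qed.

Lemma inv_hom_ecount (A B : fgr) (f : A -> B) (g : B -> A) :
  is_hom f -> cancel f g -> cancel g f -> ecount B <= ecount A -> is_hom g.
Proof.
move=> f_hom fK gK le_BA u v uv; pose f2 (p : A * A) := (f p.1, f p.2).
have f2_inj : injective f2 by move=> [? ?] [? ?] [/(can_inj fK) -> /(can_inj fK) ->].
set EA := [set p : A * A | edge p.1 p.2]; set EB := [set p : B * B | edge p.1 p.2].
have f2_EA : f2 @: EA = EB.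
  apply/eqP; rewrite eqEcard card_imset // le_BA andbT.
  by apply/subsetP => q /imsetP [p]; rewrite inE => /f_hom ? ->; rewrite inE.
have : (u, v) \in f2 @: EA by rewrite f2_EA inE.
by case/imsetP=> -[x y]; rewrite inE => xy [-> ->]; rewrite !fK.
Qed.

Lemma hom_le_descent (A B : fgr) : hom_le B A ->
  #|B| < #|A| \/ #|B| = #|A| /\ ecount A < ecount B \/ strong_hom_le A B.
Proof.
case=> f [f_hom f_surj].
have := surj_card f_surj; rewrite leq_eqVlt => /predU1P [eq_AB | ]; last by left.
have f_inj := surj_card_inj f_surj (eq_leq (esym eq_AB)).
have := ecount_inj_hom f_hom f_inj.
rewrite leq_eqVlt => /predU1P [eq_ecount | ]; last by right; left.
right; right; have [g fK gK] := inj_card_bij f_inj (eq_leq eq_AB).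
exists g; split=> [|a]; last by exists (f a).
split=> [|u v _ _ uv]; first exact: inv_hom_ecount f_hom fK gK (eq_leq (esym eq_ecount)).
by exists (f u), (f v); rewrite !fK; split=> //; apply: f_hom.
Qed.

Lemma no_hom_descent (C : fgr -> Prop) (le : fgr -> fgr -> Prop) :
  (forall A B, le A B -> hom_le A B) -> (forall A B, strong_hom_le A B -> le A B) ->
  ~ exists g : nat -> fgr, (forall n, C (g n)) /\
      forall n, le (g n.+1) (g n) /\ ~ le (g n) (g n.+1).
Proof.
move=> le_hom strong_le [g [_ g_desc]].
apply: (@no_lex_descent (fun n => #|g n|) (fun n => #|g n| ^ 2 - ecount (g n))) => n.
have [/le_hom/hom_le_descent] := g_desc n.
case=> [lt | [[eq_card lt_e] | /strong_le //]]; [by left | right].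
by split=> //; have := ecount_le (g n.+1); rewrite eq_card; lia.
Qed.

Section Matchings.
Variable G : fgr.

Definition ends (P : {set G * G}) : {set G} := [set p.1 | p in P] :|: [set p.2 | p in P].

Lemma card_ends (P : {set G * G}) : #|ends P| <= #|P|.*2.
Proof.
rewrite -addnn; apply: leq_trans (leq_card_setU _ _) (leq_add _ _); exact: leq_imset_card.
Qed.

Lemma ends_setU1 (p : G * G) (P : {set G * G}) : ends (p |: P) = p.1 |: (p.2 |: ends P).
Proof. by rewrite /ends !imsetU1 -setUA [_ :|: (p.2 |: _)]setUCA. Qed.

(* As [#|ends P| <= #|P|.*2], the cardinality condition says that the endpoints
   of the pairs in [P] are pairwise distinct. *)
Definition matching (P : {set G * G}) : bool :=
  [forall p in P, edge p.1 p.2] && (#|ends P| == #|P|.*2).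

Definition max_matching := [arg max_(P > set0 | matching P) #|P|].

Lemma max_matchingP :
  matching max_matching /\ forall P, matching P -> #|P| <= #|max_matching|.
Proof.
rewrite /max_matching; case: arg_maxnP => [|P mP P_max]; last by [].
rewrite /matching /ends !imset0 setU0 !cards0 eqxx andbT.
by apply/forall_inP => p; rewrite inE.
Qed.

Definition vertex_cover (S : {set G}) : Prop :=
  forall x y : G, edge x y -> x != y -> (x \in S) || (y \in S).

Lemma vertex_cover_nonedge (S : {set G}) (x y : G) :
  vertex_cover S -> x \notin S -> y \notin S -> x != y -> ~~ edge x y.
Proof.
by move=> S_cover xS yS xy; apply/negP => /S_cover/(_ xy); rewrite (negbTE xS) (negbTE yS).
Qed.

Lemma max_matching_cover : vertex_cover (ends max_matching).
Proof.
have [/andP [/forall_inP M_edge /eqP M_card] M_max] := max_matchingP.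
move=> u v uv u_neq_v; apply/negPn/negP; rewrite negb_or => /andP [uM vM].
have uvM : (u, v) \notin max_matching.
  by apply: contra uM => uvM; rewrite inE; apply/orP; left; apply/imsetP; exists (u, v).
have : matching ((u, v) |: max_matching).
  apply/andP; split.
    by apply/forall_inP => p; rewrite in_setU1 => /predU1P [-> | /M_edge].
  rewrite ends_setU1 !cardsU1 in_setU1 negb_or u_neq_v uM vM M_card uvM.
  by rewrite /= doubleS.
by move/M_max; rewrite cardsU1 uvM ltnn.
Qed.

Lemma matching_disjoint_edges (P : {set G * G}) : matching P ->
  disjoint_edges (fun i : 'I_#|P| => (enum_val i).1) (fun i => (enum_val i).2).
Proof.
case/andP => /forall_inP P_edge /eqP P_card.
split=> [i | ]; first exact/P_edge/enum_valP.
set e := fun i => _; have ends_sub : ends P \subset e @: setT.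
  apply/subsetP => x; rewrite inE => /orP [] /imsetP [p pP ->]; apply/imsetP.
    by exists (inl (enum_rank_in pP p)); rewrite //= enum_rankK_in.
  by exists (inr (enum_rank_in pP p)); rewrite //= enum_rankK_in.
move=> i j; apply: (imset_injP _ i j); rewrite ?inE // eqn_leq leq_imset_card /=.
by rewrite cardsT card_sum card_ord addnn -P_card subset_leq_card.
Qed.

End Matchings.

Lemma card_max_matching_ends (G : fgr) (N : nat) :
  (forall (k : nat) (a b : 'I_k -> G), disjoint_edges a b -> k <= N) ->
  #|ends (max_matching G)| <= N.*2.
Proof.
have [M_matching _] := max_matchingP G.
move/(_ _ _ _ (matching_disjoint_edges M_matching)) => card_M.
by apply: leq_trans (card_ends _) _; rewrite leq_double.
Qed.

Definition profile (G : fgr) (S : {set G}) (v : G) : bool * seq bool :=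
  (edge v v, [seq edge v y | y <- enum S]).

Definition profile_class (G : fgr) (S : {set G}) (t : bool * seq bool) : {set G} :=
  [set v in ~: S | profile S v == t].

Lemma size_profile (G : fgr) (S : {set G}) (v : G) : size (profile S v).2 = #|S|.
Proof. by rewrite size_map cardE. Qed.

Lemma edge_profile (G : fgr) (S : {set G}) (v x : G) :
  x \in S -> edge v x = nth false (profile S v).2 (index x (enum S)).
Proof. by move=> xS; rewrite (nth_map x) ?nth_index ?index_mem ?mem_enum. Qed.

Lemma mem_profile_class (G : fgr) (S : {set G}) (v : G) :
  (v \in profile_class S (profile S v)) = (v \notin S).
Proof. by rewrite !inE eqxx andbT. Qed.

Section OntoMap.
Variables (T1 T2 : finType) (A : {set T1}) (B : {set T2}) (b0 : T2).

Definition onto_map (x : T1) : T2 := nth b0 (enum B) (index x (enum A) %% #|B|).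

Lemma onto_map_in x : 0 < #|B| -> onto_map x \in B.
Proof. by move=> B_gt0; rewrite -mem_enum mem_nth // -cardE ltn_pmod. Qed.

Lemma onto_map_onto y : #|B| <= #|A| -> y \in B -> exists2 x, x \in A & onto_map x = y.
Proof.
move=> le_BA yB; have yB_lt : index y (enum B) < #|B| by rewrite cardE index_mem mem_enum.
have [a0 _] : exists a0, a0 \in A.
  by apply/card_gt0P; apply: leq_trans le_BA; apply: leq_ltn_trans yB_lt.
have yA_lt : index y (enum B) < size (enum A) by rewrite -cardE (leq_trans yB_lt).
exists (nth a0 (enum A) (index y (enum B))); first by rewrite -mem_enum mem_nth.
by rewrite /onto_map index_uniq ?enum_uniq // modn_small // nth_index ?mem_enum.
Qed.

End OntoMap.

Section ProfileCriterion.
Variables (G H : fgr) (SG : {set G}) (SH : {set H}).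
Hypotheses (SG_cover : vertex_cover SG) (SH_cover : vertex_cover SH).
Hypothesis profile_cover :
  [seq profile SG x | x <- enum SG] = [seq profile SH y | y <- enum SH].
Hypothesis card_class : forall t, #|profile_class SG t| <= #|profile_class SH t|.
Hypothesis class_gt0 : forall t, 0 < #|profile_class SH t| -> 0 < #|profile_class SG t|.

Lemma card_cover_eq : #|SG| = #|SH|.
Proof. by rewrite !cardE -(size_map (profile SG)) profile_cover size_map. Qed.

Section Shrink.
Variable d : G.

Definition shrink (h : H) : G :=
  if h \in SH then nth d (enum SG) (index h (enum SH))
  else onto_map (profile_class SH (profile SH h)) (profile_class SG (profile SH h)) d h.

Lemma shrink_outside h : h \notin SH -> shrink h \in profile_class SG (profile SH h).
Proof.
move=> hS; rewrite /shrink (negbTE hS) onto_map_in // class_gt0 //.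
by apply/card_gt0P; exists h; rewrite mem_profile_class.
Qed.

Lemma shrink_cover h : h \in SH ->
  [/\ shrink h \in SG, index (shrink h) (enum SG) = index h (enum SH)
    & profile SG (shrink h) = profile SH h].
Proof.
move=> hS; have i_lt : index h (enum SH) < size (enum SG).
  by rewrite -cardE card_cover_eq cardE index_mem mem_enum.
rewrite /shrink hS -mem_enum mem_nth // index_uniq ?enum_uniq //; split=> //.
rewrite -(nth_map d (false, [::])) // profile_cover (nth_map h) ?nth_index ?mem_enum //.
by rewrite -cardE -card_cover_eq cardE.
Qed.

Lemma mem_shrink h : (shrink h \in SG) = (h \in SH).
Proof.
have [hS | hS] := boolP (h \in SH); first by case: (shrink_cover hS).
by move: (shrink_outside hS); rewrite !inE => /andP [/negbTE].
Qed.

Lemma profile_shrink h : profile SG (shrink h) = profile SH h.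
Proof.
have [hS | hS] := boolP (h \in SH); first by case: (shrink_cover hS).
by move: (shrink_outside hS); rewrite !inE => /andP [_ /eqP].
Qed.

Lemma edge_shrink_cover x y : y \in SH -> edge (shrink x) (shrink y) = edge x y.
Proof.
move=> yS; have [fyS index_fy _] := shrink_cover yS.
by rewrite (edge_profile _ fyS) (edge_profile _ yS) profile_shrink index_fy.
Qed.

Lemma edge_shrink x y :
  [|| x \in SH, y \in SH | x == y] -> edge (shrink x) (shrink y) = edge x y.
Proof.
case/or3P=> [xS | /edge_shrink_cover // | /eqP <-].
  by rewrite edge_sym [RHS]edge_sym edge_shrink_cover.
exact: (congr1 fst (profile_shrink x)).
Qed.

Lemma shrink_surj : surj shrink.
Proof.
move=> u; have [uS | uS] := boolP (u \in SG).
  have i_lt : index u (enum SG) < size (enum SH).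
    by rewrite -cardE -card_cover_eq cardE index_mem mem_enum.
  have [h0 _] : exists h0 : H, True by move: i_lt; case: (enum SH) => // h0; exists h0.
  have hS : nth h0 (enum SH) (index u (enum SG)) \in SH by rewrite -mem_enum mem_nth.
  exists (nth h0 (enum SH) (index u (enum SG))).
  by rewrite /shrink hS index_uniq ?enum_uniq // nth_index ?mem_enum.
have uC := uS; rewrite -mem_profile_class in uC.
have [h hC <-] := onto_map_onto d (card_class _) uC.
exists h; move: hC; rewrite !inE => /andP [hS /eqP <-].
by rewrite /shrink (negbTE hS).
Qed.

Lemma shrink_strong_hom : is_strong_hom shrink.
Proof.
split=> [x y xy | _ _ [x <-] [y <-] fxy].
  have [covered | ] := boolP [|| x \in SH, y \in SH | x == y]; first by rewrite edge_shrink.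
  by rewrite !negb_or => /and3P [xS yS /(vertex_cover_nonedge SH_cover xS yS)]; rewrite xy.
have [covered | ] := boolP [|| x \in SH, y \in SH | x == y].
  by exists x, y; rewrite -edge_shrink.
rewrite !negb_or => /and3P [xS yS _].
have [fx_fy | ] := eqVneq (shrink x) (shrink y).
  by exists x, x; split; rewrite // -edge_shrink ?eqxx ?orbT // {2}fx_fy.
by move/(vertex_cover_nonedge SG_cover); rewrite !mem_shrink fxy => /(_ xS yS).
Qed.

End Shrink.

Lemma strong_hom_le_of_profiles : strong_hom_le G H.
Proof.
case: (pickP (@predT G)) => [d _ | G0].
  by exists (shrink d); split; [apply: shrink_strong_hom | apply: shrink_surj].
have H0 (h : H) : False.
  have [hS | hS] := boolP (h \in SH).
    have : 0 < #|SG| by rewrite card_cover_eq; apply/card_gt0P; exists h.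
    by case/card_gt0P => u _; have := G0 u.
  have : 0 < #|profile_class SG (profile SH h)|.
    by apply: class_gt0; apply/card_gt0P; exists h; rewrite mem_profile_class.
  by case/card_gt0P => u _; have := G0 u.
exists (fun h => match H0 h with end).
by split=> [|u]; [split=> [x | u v [x]]; case: (H0 x) | have := G0 u].
Qed.

End ProfileCriterion.

Section Coding.
Variable K : nat.

Definition code (t : bool * seq bool) : bool * {set 'I_K} :=
  (t.1, [set i : 'I_K | nth false t.2 i]).

Lemma code_inj (t t' : bool * seq bool) :
  size t.2 = size t'.2 -> size t.2 <= K -> code t = code t' -> t = t'.
Proof.
case: t t' => [b s] [b' s'] /= eq_size le_K [-> /setP eq_s]; congr pair.
apply/(@eq_from_nth _ false) => // i i_lt.
by have := eq_s (Ordinal (leq_trans i_lt le_K)); rewrite !inE.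
Qed.

Definition code_class (G : fgr) (S : {set G}) (c : bool * {set 'I_K}) : {set G} :=
  [set v in ~: S | code (profile S v) == c].

Lemma code_classE (G : fgr) (S : {set G}) (t : bool * seq bool) :
  #|S| <= K -> size t.2 = #|S| -> code_class S (code t) = profile_class S t.
Proof.
move=> S_le size_t; apply/setP => v; rewrite !inE; congr andb.
by apply/eqP/eqP => [/code_inj | -> //]; apply; rewrite size_profile.
Qed.

Lemma size_profile_class (G : fgr) (S : {set G}) (t : bool * seq bool) (v : G) :
  v \in profile_class S t -> size t.2 = #|S|.
Proof. by rewrite inE => /andP [_ /eqP <-]; rewrite size_profile. Qed.

Lemma size_nth_profile (G : fgr) (S : {set G}) (i : nat) :
  i < #|S| -> size (nth (false, [::]) [seq profile S x | x <- enum S] i).2 = #|S|.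
Proof.
move=> i_lt; set t := nth _ _ i.
have : t \in map (profile S) (enum S) by rewrite mem_nth // size_map -cardE.
by case/mapP => x _ ->; rewrite size_profile.
Qed.

(* The data of [S] that must agree exactly, coded into a finite type; the class
   sizes [#|code_class S c|] are compared by Dickson's lemma instead. *)
Definition shape (G : fgr) (S : {set G}) :=
  (inord #|S| : 'I_K.+1,
   [ffun i : 'I_K => code (nth (false, [::]) [seq profile S x | x <- enum S] i)],
   [set c | 0 < #|code_class S c|]).

Lemma strong_hom_le_of_shape (G H : fgr) (SG : {set G}) (SH : {set H}) :
  vertex_cover SG -> vertex_cover SH -> #|SG| <= K -> #|SH| <= K ->
  shape SG = shape SH -> (forall c, #|code_class SG c| <= #|code_class SH c|) ->
  strong_hom_le G H.
Proof.
move=> SG_cover SH_cover SG_le SH_le [/(congr1 (@nat_of_ord _))]; rewrite !inordK ?ltnS //.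
move=> eq_card /ffunP eq_prof /setP eq_gt0 le_card.
apply: (strong_hom_le_of_profiles SG_cover SH_cover) => [|t|t].
- apply: (@eq_from_nth _ (false, [::])) => [|i]; first by rewrite !size_map -!cardE.
  rewrite size_map -cardE => i_lt; apply: code_inj; rewrite ?size_nth_profile -?eq_card //.
  by have := eq_prof (Ordinal (leq_trans i_lt SG_le)); rewrite !ffunE.
- have [-> | [v /size_profile_class size_t]] := set_0Vmem (profile_class SG t).
    by rewrite cards0.
  have size_tH : size t.2 = #|SH| by rewrite -eq_card.
  by rewrite -(code_classE SG_le size_t) -(code_classE SH_le size_tH).
- case/card_gt0P => h hC; have size_t := size_profile_class hC.
  have size_tG : size t.2 = #|SG| by rewrite eq_card.
  have := eq_gt0 (code t).
  rewrite !inE -(code_classE SG_le size_tG) (code_classE SH_le size_t) => ->.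
  by apply/card_gt0P; exists h.
Qed.

End Coding.

Lemma good_strong_pair (C : fgr -> Prop) (N : nat) :
  (forall G : fgr, C G ->
     forall (k : nat) (a b : 'I_k -> G), disjoint_edges a b -> k <= N) ->
  forall g : nat -> fgr, (forall n, C (g n)) ->
  exists i j, i < j /\ strong_hom_le (g i) (g j).
Proof.
move=> C_bounded g gC; pose S n := ends (max_matching (g n)).
have S_le n : #|S n| <= N.*2 := card_max_matching_ends (C_bounded _ (gC n)).
have [i [j [ij eq_shape le_card]]] :=
  dickson_labelled (fun n => shape N.*2 (S n))
    (fun n (c : bool * {set 'I_N.*2}) => #|code_class (S n) c|).
exists i, j; split=> //.
exact: strong_hom_le_of_shape (@max_matching_cover (g i)) (@max_matching_cover (g j))
  (S_le i) (S_le j) eq_shape le_card.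
Qed.

Lemma no_antichain (C : fgr -> Prop) (le : fgr -> fgr -> Prop) :
  (forall g : nat -> fgr, (forall n, C (g n)) ->
     exists i j, i < j /\ strong_hom_le (g i) (g j)) ->
  (forall A B, strong_hom_le A B -> le A B) ->
  ~ exists g : nat -> fgr, (forall n, C (g n)) /\ forall i j, i <> j -> ~ le (g i) (g j).
Proof.
move=> good strong_le [g [gC g_anti]]; have [i [j [ij gij]]] := good g gC.
by apply: (g_anti i j); [apply/eqP; rewrite ltn_eqF | apply: strong_le].
Qed.

Theorem corollary2p9 (C : fgr -> Prop) (N : nat) :
  (forall G : fgr, C G ->
     forall (k : nat) (a b : 'I_k -> G), disjoint_edges a b -> k <= N) ->
  wqo_on C hom_le /\ wqo_on C strong_hom_le.
Proof.
move=> C_bounded; have good := good_strong_pair C_bounded.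
split; split.
- exact: no_hom_descent (fun _ _ => id) strong_hom_le_hom_le.
- exact: no_antichain good strong_hom_le_hom_le.
- exact: no_hom_descent strong_hom_le_hom_le (fun _ _ => id).
- exact: no_antichain good (fun _ _ => id).
Qed.
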